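(* Let $\phi:[0,1]\to[0,1]$ be concave, $\phi(0)=0$, $\phi(1)=1$, continuous at $0$, with right derivative $\phi'(0)=\infty$. Then the Marcinkiewicz norm $\|\cdot\|_{M_\phi}$ is equivalent to the positive translation equivariant Marcinkiewicz norm $\|\cdot\|_{TM_\phi}$, even though \[ C:=\sup_{t\in(0,1)}\ \inf_{t'\in(0,1]}\ \sup_{0<\alpha\le1}\frac{\phi_{TM,t}(\alpha)}{\phi_{M,t'}(\alpha)}=\infty, \] where $\phi_{TM,t}(x)=\phi(t)x/t$ for $x\le t$ and $\phi_{TM,t}(x)=\frac{1-\phi(t)}{1-t}x+\frac{\phi(t)-t}{1-t}$ for $x>t$, and $\phi_{M,t'}(x)=\phi(t')x/t'$ for $x\le t'$ and $\phi_{M,t'}(x)=\phi(t')$ for $x>t'$.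
   Context: $\Omega=[0,1]$ with Lebesgue measure $\mu$; $X^*(\omega)=\inf\{\lambda\ge0:\mu\{|X|>\lambda\}\le\omega\}$. Marcinkiewicz norm $\|X\|_{M_\phi}=\sup_{0<t\le1}\frac{\phi(t)}{t}\int_0^tX^*\,d\omega$; positive translation equivariant Marcinkiewicz norm $\|X\|_{TM_\phi}=\sup_{0<t<1}\{\frac{\phi(t)}{t}\int_0^tX^*\,d\omega+\frac{\phi(t)-1}{t-1}\int_t^1X^*\,d\omega\}$. Two norms are equivalent if the sets of functions on which they are finite coincide and they are bounded by constant multiples of each other there. *)

From HB Require Import structures.
From mathcomp Require Import all_boot all_order all_algebra.
From mathcomp Require Import all_classical all_reals all_analysis.
Set Implicit Arguments. Unset Strict Implicit. Unset Printing Implicit Defensive.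
Import Order.TTheory GRing.Theory Num.Theory.
Import numFieldNormedType.Exports.
Local Open Scope classical_set_scope.
Local Open Scope ring_scope.

Section Defs.
Variable R : realType.
Local Notation mu := (@lebesgue_measure R).

Definition distrib (X : R -> R) (lam : R) : \bar R :=
  mu [set w | w \in `[0, 1] /\ lam < `|X w|].

Definition decr_rearr (X : R -> R) (w : R) : \bar R :=
  ereal_inf [set lam%:E | lam in [set lam : R | 0 <= lam /\ (distrib X lam <= w%:E)%E]].

Definition int_rearr (X : R -> R) (a b : R) : \bar R :=
  (\int[mu]_(w in `[a, b]) decr_rearr X w)%E.

Definition M_norm (phi : R -> R) (X : R -> R) : \bar R :=
  ereal_sup [set ((phi t / t)%:E * int_rearr X 0 t)%E | t in `]0, 1]].

Definition TM_norm (phi : R -> R) (X : R -> R) : \bar R :=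
  ereal_sup [set ((phi t / t)%:E * int_rearr X 0 t
                  + ((phi t - 1) / (t - 1))%:E * int_rearr X t 1)%E | t in `]0, 1[].

Definition equiv_norms (N1 N2 : (R -> R) -> \bar R) : Prop :=
  exists c1 c2 : R, 0 < c1 /\ 0 < c2 /\
    forall X : R -> R, measurable_fun (`[0, 1] : set R) X ->
      ((N1 X < +oo)%E <-> (N2 X < +oo)%E) /\
      ((N1 X < +oo)%E -> (N1 X <= c1%:E * N2 X)%E /\ (N2 X <= c2%:E * N1 X)%E).

Definition phi_TM (phi : R -> R) (t x : R) : R :=
  if x <= t then phi t * x / t
  else (1 - phi t) / (1 - t) * x + (phi t - t) / (1 - t).

Definition phi_M (phi : R -> R) (t' x : R) : R :=
  if x <= t' then phi t' * x / t' else phi t'.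

Definition C_const (phi : R -> R) : \bar R :=
  ereal_sup [set ereal_inf [set ereal_sup
      [set (phi_TM phi t a / phi_M phi t' a)%:E | a in `]0, 1]]
    | t' in `]0, 1]] | t in `]0, 1[].

Definition concave_on01 (phi : R -> R) : Prop :=
  forall x y a : R, x \in `[0, 1] -> y \in `[0, 1] -> a \in `[0, 1] ->
    a * phi x + (1 - a) * phi y <= phi (a * x + (1 - a) * y).

End Defs.

(* Since X^* is nonincreasing, its mean over [0, t] dominates its mean over
   [0, 1], and concavity of phi with phi 0 = 0, phi 1 = 1 gives the weights
   (1 - phi t) / (1 - t) <= 1 <= phi t / t.  Hence every term of M is bounded by
   TM; the term at t = 1 is the L^1 norm, the limit of t * L^1 <= int_0^t X^* as
   t -> 1.  Every term of TM is at most a term of M plus the L^1 norm, so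
   M <= TM <= 2 M.
   C is infinite: given A, take s with phi s < 1/A and, as phi'(0) = +oo, t <= s
   with phi t / t >= A / s.  For t' <= s the ratio at alpha = 1 is 1 / phi t' > A,
   and for t' > s the ratio at alpha = t is at least s * phi t / t >= A. *)

From HB Require Import structures.
From mathcomp Require Import all_boot all_order all_algebra.
From mathcomp Require Import all_classical all_reals all_analysis.
From mathcomp Require Import measurable_realfun ring lra.
Import Order.TTheory GRing.Theory Num.Theory.
Import numFieldNormedType.Exports.
Local Open Scope classical_set_scope.
Local Open Scope ring_scope.

Section nonincreasing_integral.
Context {R : realType}.
Local Notation mu := (@lebesgue_measure R).
Local Open Scope ereal_scope.
Variable f : R -> \bar R.
Hypothesis f_ge0 : forall x, 0 <= f x.
Hypothesis f_ni : nonincreasing_fun f.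

Lemma nonincreasing_emeasurable (D : set R) : measurable D -> measurable_fun D f.
Proof.
move=> mD _; apply: (measurability _ (ErealGenCInfty.measurableE R)) => //.
move=> _ [_ [r ->] <-]; apply: measurableI => //.
apply: is_interval_measurable => s t /=; rewrite !in_itv/= !andbT => fs ft u.
by move=> /andP[_ ut]; rewrite in_itv/= andbT (le_trans ft)// f_ni.
Qed.

Lemma integral_itv_cst (a b : R) (c : \bar R) : (a <= b)%R ->
  \int[mu]_(x in `[a, b]) c = (b - a)%:E * c.
Proof.
move=> ab; rewrite integral_cst//= lebesgue_measure_itv/= lte_fin muleC.
by case: ltgtP ab => // <- _; rewrite subrr.
Qed.

Lemma ge0_integral_itv_split (a b c : R) : (a <= b)%R -> (b <= c)%R ->
  \int[mu]_(x in `[a, c]) f x =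
  \int[mu]_(x in `[a, b]) f x + \int[mu]_(x in `[b, c]) f x.
Proof.
move=> ab bc.
rewrite (@itv_bndbnd_setU _ _ (BLeft a) (BRight b) (BRight c)) ?bnd_simp//.
rewrite ge0_integral_setU//=.
- by rewrite integral_itv_obnd_cbnd//; exact: nonincreasing_emeasurable.
- by apply: nonincreasing_emeasurable; exact: measurableU.
- rewrite disj_set2E; apply/eqP/seteqP; split => x //=.
  by rewrite !in_itv/= => -[/andP[_ xb] /andP[bx _]]; rewrite ltNge xb in bx.
Qed.

Lemma nonincreasing_integral_itv_ge (a b : R) : (a <= b)%R ->
  (b - a)%:E * f b <= \int[mu]_(x in `[a, b]) f x.
Proof.
move=> ab; rewrite -integral_itv_cst//; apply: ge0_le_integral => //.
- exact: nonincreasing_emeasurable.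
- by move=> x; rewrite /= in_itv/= => /andP[_ xb]; exact: f_ni.
Qed.

Lemma nonincreasing_integral_itv_le (a b : R) : (a <= b)%R ->
  \int[mu]_(x in `[a, b]) f x <= (b - a)%:E * f a.
Proof.
move=> ab; rewrite -integral_itv_cst//; apply: ge0_le_integral => //.
- exact: nonincreasing_emeasurable.
- by move=> x; rewrite /= in_itv/= => /andP[ax _]; exact: f_ni.
Qed.

Lemma nonincreasing_integral_itv_mean (a t b : R) : (a <= t)%R -> (t <= b)%R ->
  (t - a)%:E * \int[mu]_(x in `[a, b]) f x <=
  (b - a)%:E * \int[mu]_(x in `[a, t]) f x.
Proof.
move=> le_at le_tb; have ta0 : 0 <= (t - a)%:E by rewrite lee_fin subr_ge0.
have bt0 : 0 <= (b - t)%:E by rewrite lee_fin subr_ge0.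
rewrite (@ge0_integral_itv_split a t b)// ge0_muleDr ?integral_ge0//.
have -> : (b - a)%:E = (t - a)%:E + (b - t)%:E.
  by rewrite -EFinD; congr (_%:E); lra.
rewrite ge0_muleDl// leeD2l//.
apply: le_trans (lee_wpmul2l ta0 (nonincreasing_integral_itv_le _ _ le_tb)) _.
rewrite muleCA; apply: lee_wpmul2l => //.
exact: nonincreasing_integral_itv_ge.
Qed.

End nonincreasing_integral.

Section rearrangement.
Context {R : realType}.
Local Open Scope ereal_scope.
Variable X : R -> R.

Lemma decr_rearr_ge0 (w : R) : 0 <= decr_rearr X w.
Proof. by apply: le_ereal_inf_tmp => _ [l [l0 _] <-]; rewrite lee_fin. Qed.

Lemma decr_rearr_nonincreasing : nonincreasing_fun (decr_rearr X).
Proof.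
move=> x y xy; apply: ereal_inf_le_tmp => _ [l [l0 hl] <-].
by exists l => //; split => //; rewrite (le_trans hl)// lee_fin.
Qed.

Lemma int_rearr_ge0 (a b : R) : 0 <= int_rearr X a b.
Proof. by apply: integral_ge0 => x _; exact: decr_rearr_ge0. Qed.

Lemma int_rearr_split (t : R) : (0 <= t <= 1)%R ->
  int_rearr X 0 1 = int_rearr X 0 t + int_rearr X t 1.
Proof.
move=> /andP[t0 t1]; apply: ge0_integral_itv_split => //.
- exact: decr_rearr_ge0.
- exact: decr_rearr_nonincreasing.
Qed.

Lemma int_rearr_mean (t : R) : (0 <= t <= 1)%R ->
  t%:E * int_rearr X 0 1 <= int_rearr X 0 t.
Proof.
move=> /andP[t0 t1].
have := @nonincreasing_integral_itv_mean _ _ decr_rearr_ge0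
  decr_rearr_nonincreasing _ _ _ t0 t1.
by rewrite !subr0 mul1e.
Qed.

End rearrangement.

Section equiv_norms.
Context {R : realType}.
Local Open Scope ereal_scope.

Lemma equiv_norms_of_le (N1 N2 : (R -> R) -> \bar R) (c : R) : (0 < c)%R ->
  (forall X, N1 X <= N2 X) -> (forall X, N2 X <= c%:E * N1 X) ->
  equiv_norms N1 N2.
Proof.
move=> c0 N12 N21; exists 1%R, c; do 2!split => //.
move=> X _; split; last by rewrite mul1e.
split => [N1X|N2X]; last exact: le_lt_trans N2X.
by apply: le_lt_trans (N21 X) _; rewrite lte_mul_pinfty// lee_fin ltW.
Qed.

End equiv_norms.

Section comparison_functions.
Context {R : realType}.
Variable phi : R -> R.

Lemma phi_TM1 (t : R) : t < 1 -> phi_TM phi t 1 = 1.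
Proof.
move=> t1; rewrite /phi_TM leNgt t1 /= mulr1 -mulrDl.
by rewrite subrKA divff// subr_eq0 gt_eqF.
Qed.

Lemma phi_TMxx (t : R) : 0 < t -> phi_TM phi t t = phi t.
Proof. by move=> t0; rewrite /phi_TM lexx mulfK// gt_eqF. Qed.

Lemma phi_M1 (t' : R) : t' < 1 -> phi_M phi t' 1 = phi t'.
Proof. by move=> t'1; rewrite /phi_M leNgt t'1. Qed.

Lemma phi_M_le (t' a : R) : a <= t' -> phi_M phi t' a = phi t' * a / t'.
Proof. by rewrite /phi_M => ->. Qed.

Lemma C_const_ge (A t : R) : 0 < t < 1 ->
  (forall t', 0 < t' <= 1 ->
    exists2 a, 0 < a <= 1 & A <= phi_TM phi t a / phi_M phi t' a) ->
  (A%:E <= C_const phi)%E.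
Proof.
move=> t01 Ht; apply: le_trans (ereal_sup_ubound _); last by exists t.
apply: le_ereal_inf_tmp => _ [t' t'01 <-].
have [a a01 Ha] : exists2 a, 0 < a <= 1 & A <= phi_TM phi t a / phi_M phi t' a.
  by apply: Ht; move: t'01; rewrite /= in_itv.
apply: le_trans (ereal_sup_ubound _); last by exists a.
by rewrite lee_fin.
Qed.

End comparison_functions.

Section concave_phi.
Context {R : realType}.
Variable phi : R -> R.
Hypothesis phi01 : forall x : R, x \in `[0, 1] -> phi x \in `[0, 1].
Hypothesis phi_concave : concave_on01 phi.
Hypothesis phi0 : phi 0 = 0.
Hypothesis phi1 : phi 1 = 1.

Lemma phi_le1 (x : R) : 0 <= x <= 1 -> phi x <= 1.
Proof. by move=> x01; have := phi01 x; rewrite !in_itv/= => /(_ x01) /andP[]. Qed.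

Lemma phi_ge_id (x : R) : 0 <= x <= 1 -> x <= phi x.
Proof.
move=> x01; have := phi_concave 1 0 x; rewrite phi0 phi1 !mulr1 !mulr0 !addr0.
by apply; rewrite in_itv/= ?ler01 ?lexx.
Qed.

Lemma phi_nondecreasing (x y : R) : 0 <= x -> x <= y -> y <= 1 -> phi x <= phi y.
Proof.
move=> x0 xy y1; have [x1|x1] := eqVneq x 1.
  have -> : y = 1 by apply/le_anti; rewrite y1 -x1 xy.
  by rewrite x1.
have {x1} x1 : x < 1 by rewrite lt_neqAle x1 (le_trans xy y1).
pose a := (1 - y) / (1 - x).
have a01 : 0 <= a <= 1.
  apply/andP; split; first by apply: divr_ge0; rewrite subr_ge0// ltW.
  by rewrite ler_pdivrMr ?subr_gt0// mul1r lerB.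
have y_conv : a * x + (1 - a) * 1 = y.
  by rewrite /a; field; rewrite subr_eq0 gt_eqF.
have := phi_concave x 1 a.
rewrite phi1 y_conv !in_itv/= ler01 lexx x0 (le_trans xy y1).
move=> /(_ isT isT a01); have := phi_le1 x; rewrite x0 ltW// => /(_ isT).
nra.
Qed.

Lemma phi_div_ge1 (t : R) : 0 < t <= 1 -> 1 <= phi t / t.
Proof.
by move=> /andP[t0 t1]; rewrite ler_pdivlMr// mul1r phi_ge_id// ltW.
Qed.

Lemma TM_weight_ge0 (t : R) : 0 <= t < 1 -> 0 <= (phi t - 1) / (t - 1).
Proof.
move=> /andP[t0 t1]; rewrite -mulrNN -!invrN !opprB.
by apply: divr_ge0; rewrite subr_ge0 ?phi_le1 ?t0 ?ltW.
Qed.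

Lemma TM_weight_le1 (t : R) : 0 <= t < 1 -> (phi t - 1) / (t - 1) <= 1.
Proof.
move=> /andP[t0 t1]; rewrite -mulrNN -!invrN !opprB ler_pdivrMr ?subr_gt0//.
by rewrite mul1r lerB// phi_ge_id// t0 ltW.
Qed.

Local Open Scope ereal_scope.

Lemma TM_norm_ge (X : R -> R) (t : R) : (0 < t < 1)%R ->
  (phi t / t)%:E * int_rearr X 0 t <= TM_norm phi X.
Proof.
move=> /andP[t0 t1]; apply: le_trans (ereal_sup_ubound _); last first.
  by exists t => //=; rewrite in_itv/= t0.
by rewrite leeDl// mule_ge0 ?int_rearr_ge0// lee_fin TM_weight_ge0// ltW.
Qed.

Lemma int_rearr01_le_TM_norm (X : R -> R) : int_rearr X 0 1 <= TM_norm phi X.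
Proof.
apply/lee_mul01Pr; first exact: int_rearr_ge0.
move=> r r01; apply: le_trans (TM_norm_ge X r r01); case/andP: r01 => r0 r1.
apply: le_trans (int_rearr_mean X r _) _; first by rewrite !ltW.
by rewrite lee_pemull ?int_rearr_ge0// lee_fin phi_div_ge1// r0 ltW.
Qed.

Lemma M_norm_le_TM_norm (X : R -> R) : M_norm phi X <= TM_norm phi X.
Proof.
apply: ge_ereal_sup => _ [t + <-]; rewrite /= in_itv/= => /andP[t0 t1].
have [->|t_neq1] := eqVneq t 1%R.
  by rewrite phi1 divr1 mul1e; exact: int_rearr01_le_TM_norm.
by apply: TM_norm_ge; rewrite t0 lt_neqAle t_neq1.
Qed.

Lemma int_rearr01_le_M_norm (X : R -> R) : int_rearr X 0 1 <= M_norm phi X.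
Proof.
apply: le_trans (ereal_sup_ubound _); last first.
  by exists 1%R => //; rewrite /= in_itv/= ltr01 lexx.
by rewrite phi1 divr1 mul1e.
Qed.

Lemma TM_norm_le_M_norm (X : R -> R) : TM_norm phi X <= 2%:E * M_norm phi X.
Proof.
rewrite mule_natl mule2n; apply: ge_ereal_sup => _ [t + <-].
rewrite /= in_itv/= => /andP[t0 t1].
apply: leeD.
  by apply: ereal_sup_ubound; exists t => //; rewrite /= in_itv/= t0 ltW.
apply: le_trans (int_rearr01_le_M_norm X).
apply: le_trans (gee_pMl _ (int_rearr_ge0 _ _ _) _) _ => //.
- by rewrite lee_fin TM_weight_le1// ltW// t0.
- by rewrite (int_rearr_split X t) ?leeDr ?int_rearr_ge0// !ltW.
Qed.

Local Close Scope ereal_scope.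

Hypothesis phi_cont0 : phi x @[x --> 0^'+] --> phi 0.
Hypothesis phi_der0 : (phi h - phi 0) / h @[h --> 0^'+] --> +oo.

Lemma phi_lt_near0 (e : R) : 0 < e -> exists2 s, 0 < s < 1 & phi s < e.
Proof.
move=> e0; have : \forall x \near 0^'+, 0 < x < 1 /\ phi x < e.
  near=> x; split; first (apply/andP; split).
  - by near: x; exact: nbhs_right_gt.
  - by near: x; exact: nbhs_right_lt.
  - by near: x; apply: (cvgr_lt (phi 0) phi_cont0); rewrite phi0.
by move=> /filter_ex[x [x01 phix]]; exists x.
Unshelve. all: by end_near.
Qed.

Lemma phi_steep_near0 (A s : R) : 0 < s -> exists2 t, 0 < t <= s & A <= phi t / t.
Proof.
move=> s0; have : \forall x \near 0^'+, 0 < x <= s /\ A <= (phi x - phi 0) / x.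
  near=> x; split; first (apply/andP; split).
  - by near: x; exact: nbhs_right_gt.
  - by near: x; exact: nbhs_right_le.
  - by near: x; move/cvgryPge : phi_der0; apply.
by move=> /filter_ex[x [x0s]]; rewrite phi0 subr0; exists x.
Unshelve. all: by end_near.
Qed.

Lemma phi_TM_div_phi_M_unbounded (A : R) : 0 < A ->
  exists2 t, 0 < t < 1 & forall t', 0 < t' <= 1 ->
    exists2 a, 0 < a <= 1 & A <= phi_TM phi t a / phi_M phi t' a.
Proof.
move=> A0; have /phi_lt_near0[s /andP[s0 s1] phis] : 0 < A^-1 by rewrite invr_gt0.
have /(phi_steep_near0 (A / s))[t /andP[t0 ts] steep] := s0.
have t1 : t < 1 by rewrite (le_lt_trans ts s1).
exists t; first by rewrite t0.
move=> t' /andP[t'0 t'1].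
have phit'0 : 0 < phi t' by rewrite (lt_le_trans t'0)// phi_ge_id// ltW.
have [t's|st'] := leP t' s.
  exists 1; first by rewrite ltr01 lexx.
  rewrite phi_TM1// phi_M1 ?(le_lt_trans t's s1)// div1r -[A]invrK.
  rewrite lef_pV2 ?posrE ?invr_gt0// ltW// (le_lt_trans _ phis)//.
  exact: phi_nondecreasing (ltW t'0) t's (ltW s1).
exists t; first by rewrite t0 ltW.
rewrite phi_TMxx// phi_M_le; last by rewrite (le_trans ts (ltW st')).
have phit0 : 0 <= phi t by rewrite (le_trans (ltW t0))// phi_ge_id// !ltW.
have ratio_ge : A <= phi t / (t / s).
  by rewrite invf_div mulrA mulrAC -ler_pdivrMr.
have denom_le : phi t' * t / t' <= t / s.
  rewrite -mulrA; apply: le_trans (ler_piMl _ _) _.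
  - by rewrite divr_ge0 ?ltW.
  - by rewrite phi_le1// ltW.
  - by rewrite ler_pM2l// lef_pV2 ?posrE// ltW.
apply: (le_trans ratio_ge); rewrite ler_wpM2l//.
by rewrite lef_pV2 ?posrE ?divr_gt0 ?mulr_gt0.
Qed.

End concave_phi.

Theorem theorem30 (R : realType) (phi : R -> R) :
  (forall x : R, x \in `[0, 1] -> phi x \in `[0, 1]) ->
  concave_on01 phi ->
  phi 0 = 0 -> phi 1 = 1 ->
  phi x @[x --> 0^'+] --> phi 0 ->
  (phi h - phi 0) / h @[h --> 0^'+] --> +oo ->
  equiv_norms (M_norm phi) (TM_norm phi) /\ C_const phi = +oo%E.
Proof.
move=> phi01 phi_concave phi0 phi1 phi_cont0 phi_der0; split.
  apply: (@equiv_norms_of_le _ _ _ 2) => // X.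
    exact: M_norm_le_TM_norm.
  exact: TM_norm_le_M_norm.
apply/eqyP => A A0.
have [t t01 Ht] := phi_TM_div_phi_M_unbounded phi phi01 phi_concave phi0 phi1
  phi_cont0 phi_der0 A A0.
exact: C_const_ge phi A t t01 Ht.
Qed.
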